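(* Let $\mathcal{G}=(V,E)$ be a $k$-regular connected hypergraph with $n$ vertices, and let $\theta$ be the second largest eigenvalue of $A_{\mathcal{G}}$ in absolute value (i.e. $\theta=\max_{l\ge2}|\lambda_l|$ where $\lambda_1\ge\dots\ge\lambda_n$ are the eigenvalues of $A_{\mathcal{G}}$). Then $$\operatorname{diam}(\mathcal{G})\le\left\lfloor 1+\frac{\log(n-1)}{\log(k/\theta)}\right\rfloor.$$
   Context: A hypergraph $\mathcal{G}=(V,E)$ has a finite vertex set $V$ and a set $E$ of subsets of $V$ (edges), each of cardinality at least $2$. The degree $d_i$ of a vertex $i$ is the number of edges containing $i$; $\mathcal{G}$ is $k$-regular if $d_i=k$ for all $i$. The adjacency matrix $A_{\mathcal{G}}$ has $(A_{\mathcal{G}})_{ij}=\sum_{e\in E,\, i,j\in e}\frac{1}{|e|-1}$ for $i\ne j$ and zero diagonal. A path of length $l$ between $v_0$ and $v_l$ is an alternating sequence $v_0e_1v_1\dots e_lv_l$ of distinct vertices and distinct edges with $v_{i-1},v_i\in e_i$; the distance $d(i,j)$ is the minimum length of an $i$–$j$ path, $\operatorname{diam}(\mathcal{G})=\max_{i,j}d(i,j)$; connected means every two vertices are joined by a path. *)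

From HB Require Import structures.
From mathcomp Require Import all_boot all_order all_algebra.
From mathcomp Require Import all_classical all_reals all_analysis.
Set Implicit Arguments. Unset Strict Implicit. Unset Printing Implicit Defensive.
Import Order.TTheory GRing.Theory Num.Theory.
Local Open Scope ring_scope.

Section Hyper.
Variable n : nat.
Implicit Types (E : {set {set 'I_n}}) (u v : 'I_n).

Definition edges_ok E : Prop := forall e, e \in E -> (2 <= #|e|)%N.

Definition hdegree E (i : 'I_n) : nat := #|[set e in E | i \in e]|.

Definition regular E (k : nat) : Prop := forall i, hdegree E i = k.

Definition hadj (R : numFieldType) E : 'M[R]_n :=
  \matrix_(i, j) (if i == j then 0
                  else \sum_(e in E | (i \in e) && (j \in e)) (#|e|.-1)%:R^-1).

Definition is_path E (l : nat) u v : bool :=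
  [exists vs : (l.+1).-tuple 'I_n, exists es : l.-tuple {set 'I_n},
    [&& uniq vs, uniq es, head u vs == u, last u vs == v,
        all (fun e => e \in E) es &
        [forall i : 'I_l, (nth u vs i \in nth (finset.set0 : {set 'I_n}) es i)
                          && (nth u vs i.+1 \in nth (finset.set0 : {set 'I_n}) es i)]]].

Definition hconnected E : Prop := forall u v, exists l, is_path E l u v.

(* distance: least l such that a path of length l exists (a path has at
   most n vertices, so l < n); defaults to n if there is none *)
Definition hdist E u v : nat := find (fun l => is_path E l u v) (iota 0 n).

Definition hdiam E : nat := \max_(u : 'I_n) \max_(v : 'I_n) hdist E u v.
End Hyper.

From HB Require Import structures.
From mathcomp Require Import all_boot all_order all_algebra.
From mathcomp Require Import all_classical all_reals all_analysis.
From mathcomp Require Import complex sesquilinear spectral.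
From mathcomp Require Import ring zify.
Import Order.TTheory GRing.Theory Num.Theory.
Set Implicit Arguments. Unset Strict Implicit. Unset Printing Implicit Defensive.
Local Open Scope ring_scope.
Local Open Scope sesquilinear_scope.

(* If (A^t)_uv > 0 then some walk of length t joins u and v, and removing its
   loops leaves a path, so d(u, v) <= t.  Diagonalise A = P^* D P with P
   unitary.  Regularity makes the all-ones vector an eigenvector for k, and
   theta < k makes k a simple eigenvalue, so the corresponding row of P is
   constant and contributes exactly k^t / n to (A^t)_uv; by AM-GM and the
   orthonormality of the columns of P the other eigenvalues contribute at most
   theta^t (1 - 1/n) in absolute value.  Hence (A^t)_uv > 0 for all u, v once
   (n - 1) theta^t < k^t, which holds for t = floor(1 + log(n-1) / log(k/theta)). *)

Lemma split_map_dup (T U : eqType) (f : T -> U) (s : seq T) :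
  ~~ uniq (map f s) ->
  exists p1 a p2 b p3, s = p1 ++ a :: p2 ++ b :: p3 /\ f a = f b.
Proof.
elim: s => [//|c s IH] /=; rewrite negb_and negbK => /orP [/mapP [b bs fcb]|/IH].
  by case/splitPr: bs => p2 p3; exists [::], c, p2, b, p3.
by move=> [p1 [a [p2 [b [p3 [-> fab]]]]]]; exists (c :: p1), a, p2, b, p3.
Qed.

Section Walks.
Variables (n : nat) (E : {set {set 'I_n}}).

(* A walk from u is encoded as the sequence of its (edge, vertex) steps, read
   as a path of hstep starting from (set0, u); the edge set0 is a dummy. *)
Definition hstep : rel ({set 'I_n} * 'I_n) :=
  fun a b => [&& b.1 \in E, a.2 \in b.1 & b.2 \in b.1].

Local Notation hstart u := (finset.set0 : {set 'I_n}, u).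
Local Notation hwalk u p := (path hstep (hstart u) p).
Local Notation hend u p := (last (hstart u) p).2.

Lemma hstep_path_eq x y q : x.2 = y.2 -> path hstep x q = path hstep y q.
Proof. by case: q => [//|z q] /= xy; rewrite /hstep xy. Qed.

Lemma last_snd_eq (T1 T2 : Type) (x y : T1 * T2) q :
  x.2 = y.2 -> (last x q).2 = (last y q).2.
Proof. by case: q. Qed.

Lemma is_path_hwalk u p : hwalk u p ->
  uniq (map fst p) -> uniq (u :: map snd p) -> is_path E (size p) u (hend u p).
Proof.
move=> Hp Hes Hvs; set x0 := hstart u.
have vs_size : size (u :: map snd p) == (size p).+1 by rewrite /= size_map.
have es_size : size (map fst p) == size p by rewrite size_map.
apply/existsP; exists (Tuple vs_size); apply/existsP; exists (Tuple es_size).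
apply/and5P; split => //=.
  by rewrite -[u]/(x0.2) last_map.
apply/andP; split.
  apply/allP => _ /mapP [z /(nthP x0) [i ip <-] ->].
  by case/and3P: (pathP x0 Hp _ ip).
apply/forallP => i; have /and3P [_ Hi Hi1] := pathP x0 Hp _ (ltn_ord i).
have -> : nth u (u :: map snd p) i = (nth x0 (x0 :: p) i).2.
  by rewrite -(nth_map x0 u snd) //= ltnS ltnW.
by rewrite !(nth_map x0) //; apply/andP.
Qed.

Lemma hwalk_shorten u p : hwalk u p ->
  ~~ (uniq (map fst p) && uniq (u :: map snd p)) ->
  exists2 q, (size q < size p)%N & hwalk u q /\ hend u q = hend u p.
Proof.
(* Cut out the loop at a repeated edge, at a return to u, or at a repeated vertex. *)
move=> Hp; rewrite negb_and [uniq (u :: _)]/= negb_and negbK.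
case/or3P => [/split_map_dup [p1 [a [p2 [b [p3 [pE ab]]]]]]|/mapP [b bp ub]|
              /split_map_dup [p1 [a [p2 [b [p3 [pE ab]]]]]]].
- exists (p1 ++ b :: p3); first by rewrite pE !size_cat /= size_cat /=; lia.
  move: Hp; rewrite pE !cat_path /= cat_path /= !last_cat /= last_cat /=.
  case/and5P => -> /and3P [_ Hab _] _ /and3P [Eb _ Hb] ->.
  by rewrite /hstep Eb Hb -ab Hab.
- case/splitPr: bp Hp => p1 p3; rewrite cat_path last_cat /= => /and3P [_ _ Hp3].
  exists p3; first by rewrite size_cat /=; lia.
  have ub' : (hstart u).2 = b.2 := ub.
  by rewrite (hstep_path_eq _ ub') (last_snd_eq _ ub').
- exists (p1 ++ a :: p3); first by rewrite pE !size_cat /= size_cat /=; lia.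
  move: Hp; rewrite pE !cat_path /= cat_path /= !last_cat /= last_cat /=.
  case/and5P => -> -> _ _ Hp3.
  by rewrite (hstep_path_eq _ ab) (last_snd_eq _ ab).
Qed.

Lemma hwalk_is_path u p : hwalk u p ->
  exists2 l, (l <= size p)%N & is_path E l u (hend u p).
Proof.
have [m] := ubnP (size p); elim: m p => [//|m IH] p /= Hsize Hp.
have [/andP [Hes Hvs]|Hnuniq] := boolP (uniq (map fst p) && uniq (u :: map snd p)).
  by exists (size p); last exact: is_path_hwalk.
have [q Hq [Hwq <-]] := hwalk_shorten Hp Hnuniq.
have [|l Hl Hpath] := IH q _ Hwq; first exact: leq_trans Hq _.
by exists l => //; apply: leq_trans Hl (ltnW Hq).
Qed.

Lemma is_path_lt l u v : is_path E l u v -> (l < n)%N.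
Proof.
case/existsP => vs /existsP [es /andP [Hvs _]].
by have := max_card (mem vs); rewrite (card_uniqP Hvs) size_tuple card_ord.
Qed.

Lemma hdist_le l u v : is_path E l u v -> (hdist E u v <= l)%N.
Proof.
move=> Hp; rewrite leqNgt; apply/negP => /(before_find 0%N).
by rewrite nth_iota ?add0n ?Hp ?(is_path_lt Hp).
Qed.

Variable R : numFieldType.
Local Notation A := (hadj R E).

Lemma hadj_ge0 w v : 0 <= A w v.
Proof.
by rewrite mxE; case: eqP => // _; apply: sumr_ge0 => e _; rewrite invr_ge0.
Qed.

Lemma hadjX_ge0 t w v : 0 <= (A ^+ t) w v.
Proof.
elim: t v => [|t IH] v; first by rewrite expr0 mxE ler0n.
by rewrite exprSr mxE; apply: sumr_ge0 => x _; rewrite mulr_ge0 ?hadj_ge0.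
Qed.

Lemma hadj_gt0_edge w v : 0 < A w v -> exists2 e, e \in E & (w \in e) && (v \in e).
Proof.
rewrite mxE; case: eqP => _; first by rewrite ltxx.
move=> /lt0r_neq0/eqP/psumr_neq0P[e _|e /andP [/andP [eE /andP [we ve]] _]].
  by rewrite invr_ge0.
by exists e; rewrite ?we.
Qed.

Lemma hadjX_gt0_hwalk t u v : 0 < (A ^+ t) u v ->
  exists p, [/\ size p = t, hwalk u p & hend u p = v].
Proof.
elim: t v => [|t IH] v.
  by rewrite expr0 mxE; case: eqP => [<- _|_]; [exists [::] | rewrite ltxx].
rewrite exprSr mxE => /lt0r_neq0/eqP/psumr_neq0P[w _|w /= Hw].
  by rewrite mulr_ge0 ?hadj_ge0 ?hadjX_ge0.
have [/IH [p [<- Hp <-]] /hadj_gt0_edge [e eE /andP [we ve]]] :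
    0 < (A ^+ t) u w /\ 0 < A w v.
  by move: Hw; rewrite !lt0r mulf_eq0 negb_or hadjX_ge0 hadj_ge0 !andbT => /andP [/andP [-> ->] _].
exists (rcons p (e, v)); split; first by rewrite size_rcons.
  by rewrite rcons_path Hp /hstep /= eE we ve.
by rewrite last_rcons.
Qed.

Lemma hdist_le_hadjX_gt0 t u v : 0 < (A ^+ t) u v -> (hdist E u v <= t)%N.
Proof.
case/hadjX_gt0_hwalk => p [<- Hp <-].
by have [l Hl Hpath] := hwalk_is_path Hp; exact: leq_trans (hdist_le Hpath) Hl.
Qed.
End Walks.

Section Adjacency.
Variables (R : numFieldType) (n : nat) (E : {set {set 'I_n}}).
Local Notation A := (hadj R E).

Lemma tr_hadj : A^T = A.
Proof.
apply/matrixP => i j; rewrite !mxE [j == i]eq_sym; case: eqP => // _.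
by apply: eq_bigl => e; rewrite [(j \in e) && _]andbC.
Qed.

Lemma hadj_col_sum j :
  \sum_i A i j = \sum_(e in E | j \in e) (#|e|.-1)%:R * (#|e|.-1)%:R^-1.
Proof.
have -> : \sum_i A i j =
    \sum_i \sum_(e in E | j \in e) (if (i \in e) && (i != j) then (#|e|.-1)%:R^-1 else 0).
  apply: eq_bigr => i _; rewrite mxE; case: eqP => [-> | /eqP ij].
    by rewrite big1 // => e _ /=; rewrite andbF.
  rewrite big_mkcondr [RHS]big_mkcondr /=; apply: eq_bigr => e _.
  by rewrite andbT; case: (j \in e); rewrite ?andbT ?andbF.
rewrite exchange_big; apply: eq_bigr => e /andP [_ je] /=.
rewrite -big_mkcond sumr_const -[LHS]mulr_natl; congr (_%:R * _).
by rewrite (cardD1 j e) je add1n /=; apply: eq_card => i; rewrite !inE andbC.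
Qed.

Lemma mul_const_hadj k : edges_ok E -> regular E k ->
  const_mx 1 *m A = k%:R *: (const_mx 1 : 'rV_n).
Proof.
move=> Eok Ereg; apply/rowP => j; rewrite !mxE mulr1.
under eq_bigr do rewrite mxE mul1r.
rewrite hadj_col_sum -(Ereg j) /hdegree -sum1_card natr_sum.
apply: eq_big => [e|e /andP [eE _]]; first by rewrite inE.
rewrite mulfV // pnatr_eq0.
by have := Eok e eE; case: #|e| => [|[]].
Qed.
End Adjacency.

Lemma char_poly_similar (R : comNzRingType) n (Q P M : 'M[R]_n) :
  Q *m P = 1%:M -> char_poly (Q *m M *m P) = char_poly M.
Proof.
move=> QP; have QPC : map_mx polyC Q *m map_mx polyC P = 1%:M.
  by rewrite -map_mxM QP map_scalar_mx.
rewrite /char_poly; have -> : char_poly_mx (Q *m M *m P) =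
          map_mx polyC Q *m char_poly_mx M *m map_mx polyC P.
  by rewrite /char_poly_mx !map_mxM mulmxBr mulmxBl mul_mx_scalar -scalemxAl QPC scalemx1.
by rewrite !det_mulmx mulrAC -det_mulmx QPC det1 mul1r.
Qed.

Section Unitary.
Variable C : numClosedFieldType.

Lemma unitarymx_row_norm m n (M : 'M[C]_(m, n)) i :
  M \is unitarymx -> \sum_j `|M i j| ^+ 2 = 1.
Proof.
move=> /unitarymxP /matrixP /(_ i i); rewrite !mxE eqxx mulr1n => <-.
by apply: eq_bigr => j _; rewrite normCK !mxE.
Qed.

Lemma unitarymx_col_norm n (M : 'M[C]_n) j :
  M \is unitarymx -> \sum_i `|M i j| ^+ 2 = 1.
Proof.
rewrite -trmxC_unitary => /(unitarymx_row_norm j) <-.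
by apply: eq_bigr => i _; rewrite !mxE norm_conjC.
Qed.

Lemma unitarymx_mulCmx n (M : 'M[C]_n) : M \is unitarymx -> M^t* *m M = 1%:M.
Proof. by rewrite -trmxC_unitary => /unitarymxP; rewrite trmxCK. Qed.

Lemma unitarymx_off_sum_le n (P : 'M[C]_n) (d : 'rV[C]_n) j0 (th : C) t u v :
  P \is unitarymx -> (forall j, j != j0 -> `|d 0 j| <= th) ->
  `|\sum_(j | j != j0) (P j u)^* * d 0 j ^+ t * P j v|
    <= th ^+ t * ((1 - `|P j0 u| ^+ 2) + (1 - `|P j0 v| ^+ 2)) / 2.
Proof.
move=> P_unitary dth.
have off w : \sum_(j | j != j0) `|P j w| ^+ 2 = 1 - `|P j0 w| ^+ 2.
  by rewrite -(unitarymx_col_norm w P_unitary) [in RHS](bigD1 j0) //= addrC addrK.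
rewrite -!off -big_split /= -mulrA mulr_suml mulr_sumr.
apply: le_trans (ler_norm_sum _ _ _) _; apply: ler_sum => j jj0.
rewrite !normrM normrX norm_conjC mulrAC mulrC.
have th_ge0 : 0 <= th := le_trans (normr_ge0 _) (dth j jj0).
apply: ler_pM; rewrite ?exprn_ge0 ?mulr_ge0 ?lerXn2r ?nnegrE ?dth //.
exact: (real_leif_mean_square (normr_real _) (normr_real _)).1.
Qed.
End Unitary.

Section NormalSpectrum.
Variables (C : numClosedFieldType) (n : nat) (A : 'M[C]_n).
Hypothesis A_normal : A \is normalmx.
Local Notation P := (spectralmx A).
Local Notation d := (spectral_diag A).
Local Notation P_unitary := (spectral_unitarymx A).
Local Hint Resolve spectral_unitarymx : core.

Lemma spectralE : A = P^t* *m diag_mx d *m P.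
Proof. by rewrite -invmx_unitary //; apply/orthomx_spectralP. Qed.

Lemma spectral_exprE t :
  A ^+ t = P^t* *m diag_mx (map_mx (fun x => x ^+ t) d) *m P.
Proof.
elim: t => [|t IH].
  rewrite expr0 (_ : map_mx _ d = const_mx 1); last by apply/rowP => j; rewrite !mxE.
  by rewrite diag_const_mx mulmx1 unitarymx_mulCmx.
rewrite exprSr IH [X in _ * X]spectralE -mulmxE !mulmxA mulmxtVK //.
rewrite -[_ *m diag_mx d]mulmxA mulmx_diag; congr (_ *m diag_mx _ *m _).
by apply/rowP => j; rewrite !mxE exprSr.
Qed.

Lemma spectral_expr_entry t u v :
  (A ^+ t) u v = \sum_j (P j u)^* * d 0 j ^+ t * P j v.
Proof.
by rewrite spectral_exprE mxE; apply: eq_bigr => j _; rewrite mul_mx_diag !mxE.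
Qed.

Lemma char_poly_spectral : char_poly A = \prod_j ('X - (d 0 j)%:P).
Proof.
rewrite [in LHS]spectralE char_poly_similar ?unitarymx_mulCmx //.
rewrite char_poly_trig ?diag_mx_is_trig //.
by apply: eq_bigr => j _; rewrite mxE eqxx mulr1n.
Qed.

Lemma spectral_left_eigen (x : 'rV_n) a j :
  x *m A = a *: x -> d 0 j != a -> (x *m P^t*) 0 j = 0.
Proof.
move=> xA dja; have : x *m P^t* *m diag_mx d = a *: (x *m P^t*).
  by rewrite scalemxAl -xA [in x *m A]spectralE !mulmxA mulmxtVK.
move=> /rowP/(_ j); rewrite mul_mx_diag !mxE mulrC => /eqP.
by rewrite -subr_eq0 -mulrBl mulf_eq0 subr_eq0 (negPf dja) => /eqP.
Qed.

Lemma spectral_simple_left_eigen (x : 'rV_n) a j0 :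
  (forall j, (d 0 j == a) = (j == j0)) -> x *m A = a *: x ->
  x = (x *m P^t*) 0 j0 *: row j0 P.
Proof.
move=> dj0 xA; rewrite -[x in LHS](mulmxKtV _ P_unitary) // mulmx_sum_row.
rewrite (bigD1 j0) //= big1 ?addr0 // => j jj0.
by rewrite (spectral_left_eigen xA) ?dj0 // scale0r.
Qed.

(* Row j0 of P is a multiple of the all-ones vector and has norm 1. *)
Lemma spectral_const_row k j0 u v :
  (forall j, (d 0 j == k) = (j == j0)) ->
  const_mx 1 *m A = k *: (const_mx 1 : 'rV_n) ->
  (P j0 u)^* * P j0 v = n%:R^-1.
Proof.
move=> dj0 Hk; have := spectral_simple_left_eigen dj0 Hk.
set c := (_ *m _) 0 j0 => Hc.
have cP w : c * P j0 w = 1 by have /rowP/(_ w) := Hc; rewrite !mxE => <-.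
have c_neq0 : c != 0.
  by apply: contra_eq_neq (cP u) => ->; rewrite mul0r eq_sym oner_neq0.
have Pj0 w : P j0 w = c^-1 by rewrite -[P j0 w](mulKf c_neq0) cP mulr1.
have n_c : n%:R * `|c^-1| ^+ 2 = 1.
  rewrite mulr_natl -(unitarymx_row_norm j0 P_unitary) -[n in _ *+ n]card_ord.
  by rewrite -sumr_const; apply: eq_bigr => w _; rewrite Pj0.
have n_neq0 : n%:R != 0 :> C.
  by apply: contra_eq_neq n_c => ->; rewrite mul0r eq_sym oner_neq0.
by rewrite !Pj0 -normCKC; apply: (mulfI n_neq0); rewrite n_c mulfV.
Qed.
End NormalSpectrum.

Lemma perm_simple_head (R : numDomainType) (T : finType) (f : T -> R) (s : seq R) k th :
  perm_eq s [seq f j | j <- enum T] -> k \in s ->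
  (forall x, x \in behead s -> `|x| <= th) -> th < `|k| ->
  exists j0, (forall j, (f j == k) = (j == j0)) /\ (forall j, j != j0 -> `|f j| <= th).
Proof.
case: s => [//|y s] Hperm ks Hs thk.
have ks' : k \notin s by apply/negP => /Hs /(lt_le_trans thk); rewrite ltxx.
have yk : y = k by move: ks; rewrite in_cons (negPf ks') orbF => /eqP.
have [j0 _ fj0] : exists2 j0, j0 \in enum T & k = f j0.
  by apply/mapP; rewrite -(perm_mem Hperm) ks.
have Hrem : perm_eq s [seq f j | j <- rem j0 (enum T)].
  rewrite -(perm_cons y); apply: perm_trans Hperm _.
  by rewrite yk fj0 -map_cons perm_map // perm_to_rem ?mem_enum.
have fs j : j != j0 -> f j \in s.
  move=> jj0; rewrite (perm_mem Hrem) map_f //.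
  by rewrite mem_rem_uniq ?enum_uniq // !inE jj0 mem_enum.
exists j0; split => [j|j /fs /Hs //].
have [->|jj0] := eqVneq j j0; first by rewrite -fj0 eqxx.
by apply: contraNF ks' => /eqP <-; exact: fs.
Qed.

Lemma normalmx_expr_entry_dev (C : numClosedFieldType) n (A : 'M[C]_n) (s : seq C)
    (k th : C) t u v :
  A \is normalmx -> const_mx 1 *m A = k *: (const_mx 1 : 'rV_n) ->
  char_poly A = \prod_(x <- s) ('X - x%:P) ->
  (forall x, x \in behead s -> `|x| <= th) -> th < `|k| ->
  `|(A ^+ t) u v - k ^+ t / n%:R| <= th ^+ t * (1 - n%:R^-1).
Proof.
move=> A_normal Hk Hchar Hs thk.
have n_gt0 : (0 < n)%N := leq_ltn_trans (leq0n u) (ltn_ord u).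
have ks : k \in s.
  rewrite -root_prod_XsubC -Hchar -eigenvalue_root_char; apply/eigenvalueP.
  exists (const_mx 1) => //; apply/eqP => /rowP/(_ (Ordinal n_gt0)).
  by rewrite !mxE => /eqP; rewrite oner_eq0.
have Hperm : perm_eq s [seq spectral_diag A 0 j | j <- enum 'I_n].
  by apply: prod_XsubC_eq; rewrite -Hchar char_poly_spectral // big_map big_enum.
have [j0 [dj0 dth]] := perm_simple_head Hperm ks Hs thk.
have P_norm w : `|spectralmx A j0 w| ^+ 2 = n%:R^-1.
  by rewrite normCKC (spectral_const_row A_normal _ _ dj0 Hk).
have dk : spectral_diag A 0 j0 = k by apply/eqP; rewrite dj0.
rewrite spectral_expr_entry // (bigD1 j0) //= dk.
rewrite mulrAC (spectral_const_row A_normal _ _ dj0 Hk) mulrC addrAC subrr add0r.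
apply: le_trans (unitarymx_off_sum_le t u v (spectral_unitarymx A) dth) _.
by rewrite !P_norm -mulrA -mulr2n -[_ *+ 2]mulr_natr mulfK ?pnatr_eq0.
Qed.

Lemma map_mxX (R S : pzRingType) (f : {rmorphism R -> S}) n (A : 'M[R]_n) t :
  map_mx f (A ^+ t) = map_mx f A ^+ t.
Proof.
elim: t => [|t IH]; first by rewrite !expr0 map_mx1.
by rewrite !exprSr -!mulmxE map_mxM IH.
Qed.

Section RealSymmetric.
Local Open Scope complex_scope.

Lemma norm_real_complex (R : rcfType) (x : R) : `|x%:C| = `|x|%:C.
Proof. by rewrite normc_def /= expr0n /= addr0 sqrtr_sqr. Qed.

Lemma symmetric_hermsymmx (R : rcfType) n (A : 'M[R]_n) :
  A^T = A -> map_mx (real_complex R) A \is hermsymmx.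
Proof.
move=> trA; apply/is_hermitianmxP; rewrite expr0 scale1r.
by apply/matrixP => i j; rewrite -[in LHS]trA !mxE; exact/esym/conjc_real.
Qed.

Lemma symmetric_expr_entry_dev (R : rcfType) n (A : 'M[R]_n) (s : seq R)
    (k th : R) t u v :
  A^T = A -> const_mx 1 *m A = k *: (const_mx 1 : 'rV_n) ->
  char_poly A = \prod_(x <- s) ('X - x%:P) ->
  (forall x, x \in behead s -> `|x| <= th) -> th < `|k| ->
  `|(A ^+ t) u v - k ^+ t / n%:R| <= th ^+ t * (1 - n%:R^-1).
Proof.
move=> trA Hk Hchar Hs thk; set AC := map_mx (real_complex R) A.
have HkC : const_mx 1 *m AC = k%:C *: (const_mx 1 : 'rV_n).
  by rewrite -(rmorph1 (real_complex R)) -map_const_mx -map_mxM Hk map_mxZ.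
have HcharC : char_poly AC = \prod_(x <- map (real_complex R) s) ('X - x%:P).
  rewrite -map_char_poly Hchar rmorph_prod big_map.
  by apply: eq_bigr => x _; rewrite /= map_polyXsubC.
have HsC x : x \in behead (map (real_complex R) s) -> `|x| <= th%:C.
  by rewrite behead_map => /mapP [y /Hs ys ->]; rewrite norm_real_complex lecR.
have thkC : th%:C < `|k%:C| by rewrite norm_real_complex ltcR.
have := normalmx_expr_entry_dev t u v (hermitian_normalmx (symmetric_hermsymmx trA))
  HkC HcharC HsC thkC.
rewrite -map_mxX mxE.
have -> : ((A ^+ t) u v)%:C - k%:C ^+ t / n%:R = ((A ^+ t) u v - k ^+ t / n%:R)%:C.
  by rewrite rmorphB rmorphM rmorphXn fmorphV rmorph_nat.
have -> : th%:C ^+ t * (1 - n%:R^-1) = (th ^+ t * (1 - n%:R^-1))%:C.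
  by rewrite rmorphM rmorphXn rmorphB rmorph1 fmorphV rmorph_nat.
by rewrite norm_real_complex lecR.
Qed.
End RealSymmetric.

Lemma floor_ln_ratio_expn (R : realType) (a q : R) : 1 <= a -> 1 < q ->
  exists t : nat, t%:Z = Num.floor (1 + ln a / ln q) /\ a < q ^+ t.
Proof.
move=> a_ge1 q_gt1; have q_gt0 := lt_trans ltr01 q_gt1.
have lnq_gt0 : 0 < ln q by rewrite ln_gt0.
have x_ge0 : 0 <= ln a / ln q by apply: divr_ge0; [exact: ln_ge0 | exact: ltW].
exists `|Num.floor (1 + ln a / ln q)|%N.
have t_def : `|Num.floor (1 + ln a / ln q)|%N = Num.floor (1 + ln a / ln q) :> int.
  by rewrite gez0_abs // floor_ge_int /= addr_ge0.
split => //; move: (floorD1_gt (1 + ln a / ln q)); rewrite -t_def intrD addrC ltrD2r.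
rewrite ltr_pdivrMr // mulr_natl -lnXn // ltr_ln ?posrE ?exprn_gt0 //.
exact: lt_le_trans ltr01 a_ge1.
Qed.

(* If n <= 1 or th = 0 the logarithmic term is 0, because ln vanishes off
   (0, +oo) and x / 0 = 0; then t = 1 works. *)
Lemma floor_ln_ratio_witness (R : realType) (n k : nat) (th : R) :
  0 <= th -> th < k%:R ->
  exists t : nat, (t%:Z <= Num.floor (1 + ln (n%:R - 1) / ln (k%:R / th)))%R /\
    (n%:R - 1) * th ^+ t < k%:R ^+ t.
Proof.
move=> th_ge0 thk; have k_gt0 : 0 < k%:R :> R := le_lt_trans th_ge0 thk.
have [n_le1|n_gt1] := leqP n 1.
  exists 1%N; rewrite ln0 ?subr_le0 ?lern1 // mul0r addr0 floor1 !expr1.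
  by split => //; apply: le_lt_trans k_gt0; rewrite mulr_le0_ge0 // subr_le0 lern1.
have [->|th_neq0] := eqVneq th 0.
  exists 1%N; rewrite invr0 mulr0 (@ln0 _ 0) // invr0 mulr0 addr0 floor1.
  by rewrite !expr1 mulr0.
have th_gt0 : 0 < th by rewrite lt_def th_neq0.
have q_gt1 : 1 < k%:R / th by rewrite ltr_pdivlMr // mul1r.
have a_ge1 : 1 <= n%:R - 1 :> R by rewrite lerBrDr (_ : 1 + 1 = 2%:R) // ler_nat.
have [t [<- a_lt]] := floor_ln_ratio_expn a_ge1 q_gt1.
by exists t; rewrite -ltr_pdivlMr ?exprn_gt0 // -expr_div_n.
Qed.

Theorem corollary1 (R : realType) (n k : nat) (E : {set {set 'I_n}})
  (s : seq R) :
  edges_ok E -> regular E k -> hconnected E ->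
  (* s = lambda_1 >= ... >= lambda_n, the eigenvalues of A_G with multiplicity *)
  size s = n -> sorted (fun x y => y <= x) s ->
  char_poly (hadj R E) = \prod_(x <- s) ('X - x%:P) ->
  let theta := \big[Num.max/0]_(x <- behead s) `|x| in
  theta < k%:R ->
  ((hdiam E)%:Z <= Num.floor (1 + ln (n%:R - 1) / ln (k%:R / theta)))%R.
Proof.
move=> Eok Ereg _ _ _ Hchar theta thk.
have theta_ge0 : 0 <= theta.
  by rewrite /theta; elim/big_ind: _ => // x y; rewrite le_max => ->.
have [t [t_le Ht]] := floor_ln_ratio_witness n theta_ge0 thk.
apply: le_trans t_le; rewrite lez_nat.
apply/bigmax_leqP => u _; apply/bigmax_leqP => v _.
apply: (hdist_le_hadjX_gt0 (R := R)).
have Hs x : x \in behead s -> `|x| <= theta.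
  by move=> xs; exact: (le_bigmax_seq 0 x xpredT Num.norm xs).
have thk' : theta < `|k%:R| by rewrite normr_nat.
have := symmetric_expr_entry_dev t u v (tr_hadj R E) (mul_const_hadj R Eok Ereg)
  Hchar Hs thk'.
rewrite ler_distl => /andP [+ _]; apply: lt_le_trans.
have n_gt0 : (0 < n)%N := leq_ltn_trans (leq0n u) (ltn_ord u).
rewrite (_ : _ - _ = (k%:R ^+ t - (n%:R - 1) * theta ^+ t) / n%:R).
  by rewrite divr_gt0 ?ltr0n // subr_gt0.
by field; rewrite pnatr_eq0 -lt0n.
Qed.
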